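(* Let $n\in\mathbb{N}$ and let $\psi$ be an increasing concave function on $[0,\infty)$ with $\psi(0)=0$. The following are equivalent: (i) $\Lambda_\psi\cap L_\infty\not\subset L_{n,1}$; (ii) $\liminf_{t\to\infty}\psi(t)/t^{1/n}=0$; (iii) $\liminf_{m\to\infty}\psi(2^{mn})/2^m=0$.
   Context: For a measurable function $f$ on $(0,\infty)$, $\mu(f)$ is the decreasing rearrangement of $|f|$. The Lorentz space $\Lambda_\psi$ is the set of measurable $f$ on $(0,\infty)$ with $\|f\|_{\Lambda_\psi}=\int_0^\infty\mu(t;f)\,d\psi(t)<\infty$; $L_{n,1}=\Lambda_\psi$ with $\psi(t)=t^{1/n}$. In (i) the inclusion is set inclusion. *)

From HB Require Import structures.
From mathcomp Require Import all_boot all_order all_algebra.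
From mathcomp Require Import all_classical all_reals all_analysis.
Set Implicit Arguments. Unset Strict Implicit. Unset Printing Implicit Defensive.
Import Order.TTheory GRing.Theory Num.Def Num.Theory.
Import numFieldTopology.Exports.
Local Open Scope classical_set_scope.
Local Open Scope ring_scope.

(* The Lebesgue-Stieltjes measure d(psi) on (0,oo).                           *)
(* For psi nondecreasing and >= 0 on (0,oo), we use its right-continuous      *)
(* regularisation  t |-> psi(max(t,0)+)  (which coincides with psi on (0,oo)  *)
(* whenever psi is right-continuous there, e.g. concave); for other psi the   *)
(* construction is irrelevant (constant 0).                                   *)
Section psi_regularisation.
Variables (R : realType) (psi : R -> R).

Definition psi_ok : Prop :=
  {in `]0, +oo[ &, {homo psi : x y / x <= y}} /\ (forall s, 0 < s -> 0 <= psi s).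

Definition psi_reg (t : R) : R := inf [set psi s | s in `]Num.max t 0, +oo[].

Definition psiF : R -> R := if pselect psi_ok then psi_reg else cst 0.

Let S (t : R) := [set psi s | s in `]Num.max t 0, +oo[].

Let mr (t : R) : (0 : R) <= Num.max t 0. Proof. by rewrite le_max lexx orbT. Qed.
Let ml (t : R) : t <= Num.max t 0. Proof. by rewrite le_max lexx. Qed.

Let S_n0 (t : R) : S t !=set0.
Proof.
exists (psi (Num.max t 0 + 1)); exists (Num.max t 0 + 1) => //.
by rewrite /= in_itv /= andbT ltrDl.
Qed.

Let S_lb (t : R) : psi_ok -> has_lbound (S t).
Proof.
move=> [_ h0]; exists 0 => _ [s + <-]; rewrite /= in_itv /= andbT => hs.
apply: h0; apply: le_lt_trans hs; exact: mr.
Qed.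

Let reg_nd : psi_ok -> {homo psi_reg : x y / x <= y}.
Proof.
move=> ok x y xy; apply: lb_le_inf; first exact: S_n0.
move=> _ [s hs <-].
apply: (ge_inf (S_lb x ok)); exists s => //.
move: hs; rewrite /= !in_itv /= !andbT; apply: le_lt_trans.
by rewrite ge_max mr andbT (le_trans xy)// ml.
Qed.

Lemma psiF_nd : {homo psiF : x y / x <= y}.
Proof. rewrite /psiF; case: pselect => ok; first exact: reg_nd. by move=> x y _; rewrite lexx. Qed.

Lemma psiF_rc : forall x, psiF @ at_right x --> psiF x.
Proof.
rewrite /psiF; case: pselect => ok x; last exact: cvg_cst.
apply/cvgrPdist_lt => e e0.
have [_ [s hs <-] hse] := inf_adherent e0 (conj (S_n0 x) (S_lb x ok)).
have xs : x < s.
  by move: hs; rewrite /= in_itv /= andbT; apply: le_lt_trans; exact: ml.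
near=> t.
have xt : x < t by near: t; exact: nbhs_right_gt.
have ts : t < s by near: t; exact: nbhs_right_lt.
have h1 : psi_reg x <= psi_reg t by apply: reg_nd => //; exact: ltW.
have h2 : psi_reg t <= psi s.
  apply: (ge_inf (S_lb t ok)); exists s => //.
  rewrite /= in_itv /= andbT gt_max ts /=.
  by move: hs; rewrite /= in_itv /= andbT; apply: le_lt_trans; exact: mr.
rewrite ler0_norm ?subr_le0// opprB ltrBlDl.
exact: le_lt_trans h2 hse.
Unshelve. all: by end_near.
Qed.

HB.instance Definition _ := isCumulative.Build R _ R psiF psiF_nd psiF_rc.

End psi_regularisation.

(* Functions on (0,oo) are represented as f : R -> R; values at t <= 0 are    *)
(* ignored.                                                                   *)
Section lorentz.
Variable R : realType.
Local Open Scope ereal_scope.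

Definition distrib (f : R -> R) (s : R) : \bar R :=
  lebesgue_measure ([set t : R | (0 < t)%R] `&` [set t | (s < `|f t|)%R]).

Definition rearr (f : R -> R) (t : R) : \bar R :=
  ereal_inf [set s%:E | s in [set s : R | (0 <= s)%R /\ distrib f s <= t%:E]].

Definition lorentz_norm (psi : R -> R) (f : R -> R) : \bar R :=
  \int[lebesgue_stieltjes_measure (psiF psi)]_(t in `]0%R, +oo[) rearr f t.

Definition Lambda (psi : R -> R) : set (R -> R) :=
  [set f : R -> R | measurable_fun (`]0%R, +oo[ : set R) f /\ lorentz_norm psi f < +oo].

Definition Linfty : set (R -> R) :=
  [set f : R -> R | measurable_fun (`]0%R, +oo[ : set R) f /\
     exists M : R, lebesgue_measure
        ([set t : R | (0 < t)%R] `&` [set t | (M < `|f t|)%R]) = 0].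

Definition Ln1 (n : nat) : set (R -> R) := Lambda (fun t => t `^ (n%:R)^-1)%R.

End lorentz.
Arguments Linfty R : clear implicits.
Arguments Ln1 R n%_nat : clear implicits.

Definition concave_on_nonneg (R : realType) (psi : R -> R) : Prop :=
  forall x y a : R, 0 <= x -> 0 <= y -> 0 <= a -> a <= 1 ->
    a * psi x + (1 - a) * psi y <= psi (a * x + (1 - a) * y).

Section liminf_pinfty.
Variable R : realType.
Definition liminf_pinfty (f : R -> \bar R) : \bar R := limf_einf f (pinfty_nbhs R).
End liminf_pinfty.

From HB Require Import structures.
From mathcomp Require Import all_boot all_order all_algebra.
From mathcomp Require Import all_classical all_reals all_analysis measurable_realfun.
From mathcomp Require Import lra.
Import Order.TTheory GRing.Theory Num.Def Num.Theory.
Import numFieldTopology.Exports.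
Local Open Scope classical_set_scope.
Local Open Scope ring_scope.

(* Cut (0, oo) into the blocks ]2^(kn), 2^((k+1)n)], on which t^(1/n) is
   comparable to 2^k; since psi is nondecreasing, liminf psi(t)/t^(1/n) and
   liminf psi(2^(kn))/2^k vanish together.  If psi(2^(kn)) >= c 2^k for large
   k, Abel summation over the blocks bounds the L_{n,1} norm of a bounded f by
   its Lambda_psi norm.  Conversely, if psi(2^(m n))/2^m < 2^-j along a sparse
   sequence m_j, the decreasing step function equal to 2^(-m_j) on
   [2^(m_(j-1) n), 2^(m_j n)) is bounded, has Lambda_psi norm at most 4
   (concavity gives psi(2x) <= 2 psi(x)), and each block contributes at least
   1/4 to its L_{n,1} norm. *)

Section liminf_eq0.
Context {R : realType}.
Local Open Scope ereal_scope.

Lemma limf_einf_eq0 (T : choiceType) (X : filteredType T) (F : set_system X)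
    (u : X -> \bar R) : Filter F -> F [set x | 0 <= u x] ->
  limf_einf u F = 0 <->
  forall e : R, (0 < e)%R -> forall V, F V -> exists2 x, V x & u x < e%:E.
Proof.
move=> FF Fu0; rewrite limf_einfE; split.
- move=> u_inf e e0 V FV.
  have FVu0 : F (V `&` [set x | 0 <= u x]) by exact: filterI.
  have : ereal_inf (u @` (V `&` [set x | 0 <= u x])) < e%:E.
    apply: (@le_lt_trans _ _ 0); last by rewrite lte_fin.
    by rewrite -[leRHS]u_inf; apply: ereal_sup_ubound; exists (V `&` [set x | 0 <= u x]).
  by move=> /ereal_inf_lt[_ [x [Vx _] <-]]; exists x.
- move=> small; apply/eqP; rewrite eq_le; apply/andP; split.
  + apply: ge_ereal_sup => _ [V FV <-]; apply/lee_addgt0Pr => e e0.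
    have [x Vx ux] := small e e0 V FV.
    rewrite add0e; apply/ltW/(le_lt_trans _ ux).
    by apply: ereal_inf_lbound; exists x.
  + apply: (@le_trans _ _ (ereal_inf (u @` [set x | 0 <= u x]))).
      by apply: le_ereal_inf_tmp => _ [x ux <-].
    by apply: ereal_sup_ubound; exists [set x | 0 <= u x].
Qed.

Lemma liminf_pinfty_eq0 (g : R -> R) : (forall t, (0 < t)%R -> (0 <= g t)%R) ->
  liminf_pinfty (fun t => (g t)%:E) = 0 <->
  forall e : R, (0 < e)%R -> forall M : R, exists2 t, (M < t)%R & (g t < e)%R.
Proof.
move=> g_ge0; rewrite /liminf_pinfty limf_einf_eq0; last first.
  by exists 0%R; split => // t t0; rewrite /= lee_fin g_ge0.
split => [small e e0 M | small e e0 V [M [_ MV]]].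
- have [|t Mt] := small e e0 [set t | (M < t)%R].
    by exists M; split; [exact: num_real | move=> t].
  by rewrite lte_fin; exists t.
- by have [t Mt gt] := small e e0 M; exists t; [exact: MV | rewrite lte_fin].
Qed.

Lemma limn_einf_eq0 (h : nat -> R) : (forall m, (0 <= h m)%R) ->
  limn_einf (fun m => (h m)%:E) = 0 <->
  forall e : R, (0 < e)%R -> forall N, exists2 m, (N <= m)%N & (h m < e)%R.
Proof.
move=> h_ge0; rewrite /limn_einf /limn_esup -/(limf_einf _ _) limf_einf_eq0; last first.
  by exists 0%N => // m _ /=; rewrite lee_fin.
split => [small e e0 N | small e e0 V [N _ NV]].
- have [|m Nm] := small e e0 [set m | (N <= m)%N]; first by exists N.
  by rewrite lte_fin; exists m.
- by have [m Nm hm] := small e e0 N; exists m; [exact: NV | rewrite lte_fin].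
Qed.

Lemma limn_einf_neq0 (h : nat -> R) : (forall m, (0 <= h m)%R) ->
  limn_einf (fun m => (h m)%:E) != 0 ->
  exists2 c : R, (0 < c)%R & exists K, forall k, (K <= k)%N -> (c <= h k)%R.
Proof.
move=> h_ge0 /eqP; rewrite limn_einf_eq0 // => /existsNP[c /not_implyP[c0]].
move=> /existsNP[K large]; exists c => //; exists K => k Kk.
by rewrite leNgt; apply/negP => hk; apply: large; exists k.
Qed.

Lemma limn_einf_eq0_sparse (h : nat -> R) (eps : nat -> R) (d : nat) :
  (forall m, (0 <= h m)%R) -> limn_einf (fun m => (h m)%:E) = 0 ->
  (forall j, (0 < eps j)%R) ->
  exists m : nat -> nat,
    [/\ (d <= m 0)%N, forall j, (m j + d <= m j.+1)%N & forall j, (h (m j) < eps j)%R].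
Proof.
move=> h_ge0 /(limn_einf_eq0 _ h_ge0) small eps_gt0.
have pick N j : {m | (N <= m)%N & (h m < eps j)%R} by apply: cid2; exact: small.
pose fix m j := if j is j'.+1 then s2val (pick (m j' + d)%N j) else s2val (pick d 0%N).
exists m; split => [|j|[|j]].
- exact: s2valP (pick d 0%N).
- exact: s2valP (pick (m j + d)%N j.+1).
- exact: s2valP' (pick d 0%N).
- exact: s2valP' (pick (m j + d)%N j.+1).
Qed.

End liminf_eq0.

Local Notation nroot n := (fun t => t `^ (n%:R)^-1).

Section dyadic.
Context {R : realType}.
Implicit Types (n k m : nat) (t : R).

Lemma expr2_gt0 k : (0 : R) < 2 ^+ k.
Proof. exact: exprn_gt0. Qed.

Lemma ler_expr2 i k : (i <= k)%N -> (2 ^+ i : R) <= 2 ^+ k.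
Proof. by move=> ik; rewrite ler_eXn2l // ltr1n. Qed.

Lemma exists_expr2_gt t : exists k, t < 2 ^+ k.
Proof.
exists (Num.bound `|t|); apply: le_lt_trans (ler_norm t) _.
by rewrite (lt_trans (archi_boundP _)) // -natrX ltr_nat ltn_expl.
Qed.

Lemma exists_dyadic_gt n t : (0 < n)%N -> exists k, t < 2 ^+ (k * n).
Proof.
move=> n0; have [k tk] := exists_expr2_gt t; exists k.
by rewrite (lt_le_trans tk) // ler_expr2 // leq_pmulr.
Qed.

Lemma exists_dyadic_bracket n t : (0 < n)%N -> 1 <= t ->
  exists k, 2 ^+ (k * n) <= t < 2 ^+ (k.+1 * n).
Proof.
move=> n0 t1; case: (ex_minnP (exists_dyadic_gt n t n0)) => -[|k] tk kmin.
  by move: tk; rewrite mul0n expr0 ltNge t1.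
by exists k; rewrite tk andbT leNgt; apply/negP => /kmin; rewrite ltnn.
Qed.

Lemma powR_exprM_inv (x : R) m n : 0 <= x -> (0 < n)%N ->
  (x ^+ (m * n)) `^ (n%:R)^-1 = x ^+ m.
Proof.
move=> x0 n0; rewrite -powR_mulrn // -powRrM natrM -mulrA mulfV ?mulr1.
  by rewrite powR_mulrn.
by rewrite pnatr_eq0 -lt0n.
Qed.

Lemma nroot_nondecreasing n : {in Num.nneg &, {homo nroot n : s t / s <= t :> R}}.
Proof. by apply: ge0_ler_powR; rewrite invr_ge0. Qed.

Variables (n : nat) (psi : R -> R).
Hypothesis n0 : (0 < n)%N.
Hypothesis psi_nd : {in `[0, +oo[ &, {homo psi : x y / x <= y}}.
Hypothesis psi0 : 0 <= psi 0.

Lemma nondecreasing_ge0 t : 0 <= t -> 0 <= psi t.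
Proof.
move=> t0; apply: (le_trans psi0).
by apply: psi_nd; rewrite // in_itv /= ?lexx ?andbT.
Qed.

Lemma dyadic_ratio_ge0 k : 0 <= psi (2 ^+ (k * n)) / 2 ^+ k.
Proof. by rewrite divr_ge0 ?exprn_ge0 // nondecreasing_ge0 // exprn_ge0. Qed.

Lemma dyadic_ratio_le k t : 2 ^+ (k * n) <= t < 2 ^+ (k.+1 * n) ->
  psi (2 ^+ (k * n)) / 2 ^+ k <= 2 * (psi t / t `^ (n%:R)^-1).
Proof.
move=> /andP[kt tk]; have t0 : 0 < t := lt_le_trans (expr2_gt0 _) kt.
have root_lt : t `^ (n%:R)^-1 < 2 ^+ k.+1.
  rewrite -(@powR_exprM_inv 2 k.+1 n) ?ler0n //.
  apply: (@lt_le_trans _ _ ((2 ^+ (k.+1 * n)) `^ (n%:R)^-1)) => //.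
  by apply: gt0_ltr_powR; rewrite ?invr_gt0 ?ltr0n // nnegrE ?ltW.
apply: (@le_trans _ _ (psi t / 2 ^+ k)).
  by rewrite ler_pM2r ?invr_gt0 ?expr2_gt0 // psi_nd // in_itv /= ?ltW.
have -> : (2 ^+ k)^-1 = 2 / 2 ^+ k.+1 :> R.
  by rewrite exprS invfM mulrA mulfV ?mul1r // pnatr_eq0.
rewrite [leRHS]mulrCA; apply: ler_wpM2l; first exact/nondecreasing_ge0/ltW.
apply: ler_wpM2l => //; by rewrite lef_pV2 ?posrE ?powR_gt0 ?expr2_gt0 // ltW.
Qed.

Lemma liminf_nroot_ratio_eq0_dyadic :
  liminf_pinfty (fun t => (psi t / t `^ (n%:R)^-1)%:E) = 0%E <->
  limn_einf (fun m => (psi (2 ^+ (m * n)) / 2 ^+ m)%:E) = 0%E.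
Proof.
rewrite liminf_pinfty_eq0; last first.
  by move=> t t0; rewrite divr_ge0 ?nondecreasing_ge0 ?powR_ge0 ?ltW.
rewrite limn_einf_eq0; last exact: dyadic_ratio_ge0.
split => [small e e0 N | small e e0 M].
- have [t Nt te] := small (e / 2) (divr_gt0 e0 (ltr0Sn _ 1)) (Num.max 1 (2 ^+ (N * n))).
  have t1 : 1 <= t by apply/ltW/(le_lt_trans _ Nt); rewrite le_max lexx.
  have Nt' : 2 ^+ (N * n) < t by apply: le_lt_trans Nt; rewrite le_max lexx orbT.
  have [k bracket] := exists_dyadic_bracket n _ n0 t1.
  exists k.
    have := lt_trans Nt' (andP bracket).2.
    by rewrite ltr_eXn2l ?ltr1n // ltn_pmul2r // ltnS.
  apply: le_lt_trans (dyadic_ratio_le _ _ bracket) _.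
  by rewrite mulrC -ltr_pdivlMr.
- have [N MN] := exists_expr2_gt M; have [m Nm me] := small e e0 N.
  exists (2 ^+ (m * n)); last by rewrite powR_exprM_inv ?ler0n.
  by rewrite (lt_le_trans MN) // ler_expr2 // (leq_trans Nm) // leq_pmulr.
Qed.

End dyadic.

Section psiF_bounds.
Context {R : realType}.

Lemma nondecreasing_psi_ok (psi : R -> R) :
  {in `[0, +oo[ &, {homo psi : x y / x <= y}} -> 0 <= psi 0 -> psi_ok psi.
Proof.
move=> psi_nd psi0; split => [x y|s s0].
  by rewrite !in_itv /= !andbT => x0 y0; apply: psi_nd; rewrite in_itv /= ltW.
by apply: nondecreasing_ge0 (ltW s0).
Qed.

Lemma nroot_psi_ok n : psi_ok (nroot n : R -> R).
Proof.
split=> [x y|s _]; last exact: powR_ge0.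
by rewrite !in_itv /= !andbT => x0 y0; apply: nroot_nondecreasing; rewrite nnegrE ltW.
Qed.

Context {psi : R -> R} (psi_okP : psi_ok psi).

Let psiF_E : psiF psi = psi_reg psi.
Proof. by rewrite /psiF; case: pselect. Qed.

Let psi_reg_set_lbound t : has_lbound [set psi s | s in `]Num.max t 0, +oo[].
Proof.
case: psi_okP => _ psi_ge0; exists 0 => _ [s + <-]; rewrite /= in_itv /= andbT => ts.
by apply: psi_ge0; apply: le_lt_trans ts; rewrite le_max lexx orbT.
Qed.

Let psi_reg_set_neq0 t : [set psi s | s in `]Num.max t 0, +oo[] !=set0.
Proof.
exists (psi (Num.max t 0 + 1)), (Num.max t 0 + 1) => //.
by rewrite /= in_itv /= andbT ltrDl.
Qed.

Lemma psiF_le t s : Num.max t 0 < s -> psiF psi t <= psi s.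
Proof.
move=> ts; rewrite psiF_E; apply: (ge_inf (psi_reg_set_lbound t)).
by exists s; rewrite // /= in_itv /= andbT.
Qed.

Lemma psiF_ge t : 0 < t -> psi t <= psiF psi t.
Proof.
move=> t0; rewrite psiF_E; apply: lb_le_inf (psi_reg_set_neq0 t) _ => _ [s + <-].
rewrite /= in_itv /= andbT max_l => [ts|]; last exact: ltW.
by case: psi_okP => + _; apply; rewrite ?in_itv /= ?andbT // ?(lt_trans t0) // ltW.
Qed.

Lemma psiF_ge0 t : 0 <= psiF psi t.
Proof.
rewrite psiF_E; apply: lb_le_inf (psi_reg_set_neq0 t) _ => _ [s + <-].
rewrite /= in_itv /= andbT => ts.
by case: psi_okP => _; apply; apply: le_lt_trans ts; rewrite le_max lexx orbT.
Qed.

End psiF_bounds.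

Lemma nrootF_le {R : realType} n (x : R) : (0 < n)%N -> 0 < x ->
  psiF (nroot n) x <= 2 * x `^ (n%:R)^-1.
Proof.
move=> n0 x0; apply: le_trans (psiF_le (nroot_psi_ok n) x (2 * x) _) _.
  by rewrite max_l ?ltW // ltr_pMl // ltr1n.
rewrite powRM ?ler0n ?(ltW x0) //; apply: ler_wpM2r; first exact: powR_ge0.
by rewrite ler1_powR ?ler1n // invf_le1 ?ltr0n // ler1n.
Qed.

Lemma lebesgue_stieltjes_measure_itv_oc {R : realType} (F : cumulative R R) (a b : R) :
  a <= b -> lebesgue_stieltjes_measure F `]a, b] = (F b - F a)%:E.
Proof.
move=> ab; rewrite /lebesgue_stieltjes_measure /= /measure_extension /=.
rewrite measurable_mu_extE; last exact: is_ocitv.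
exact: wlength_itv_bnd.
Qed.

Section rearrangement.
Context {R : realType}.
Implicit Types (f : R -> R) (s t : R).
Local Open Scope ereal_scope.

Lemma rearr_ge0 f t : 0 <= rearr f t.
Proof. by apply: le_ereal_inf_tmp => _ [s [s0 _] <-]; rewrite lee_fin. Qed.

Lemma rearr_le f t s : (0 <= s)%R -> distrib f s <= t%:E -> rearr f t <= s%:E.
Proof. by move=> s0 ds; apply: ereal_inf_lbound; exists s. Qed.

Lemma rearr_ge f t s0 :
  (forall s, (0 <= s < s0)%R -> t%:E < distrib f s) -> s0%:E <= rearr f t.
Proof.
move=> large; apply: le_ereal_inf_tmp => _ [s [s0' ds] <-].
rewrite lee_fin leNgt; apply/negP => ss0.
by have := large s; rewrite s0' ss0 ltNge ds => /(_ isT).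
Qed.

Lemma rearr_nonincreasing f s t : (s <= t)%R -> rearr f t <= rearr f s.
Proof.
move=> st; apply: ereal_inf_le_tmp => _ [x [x0 dx] <-]; exists x => //.
by split => //; apply: le_trans dx _; rewrite lee_fin.
Qed.

Lemma measurable_distrib_set f s : measurable_fun (`]0%R, +oo[ : set R) f ->
  measurable ([set t : R | (0 < t)%R] `&` [set t | (s < `|f t|)%R]).
Proof.
move=> mf; have := measurableT_comp (@normr_measurable R setT) mf.
move=> /(_ (measurable_itv _) _ (measurable_itv `]s, +oo[%R)).
by congr measurable; apply/seteqP; split => x /=; rewrite !in_itv /= !andbT.
Qed.

Lemma rearr_le_Linfty f M : measurable_fun (`]0%R, +oo[ : set R) f ->
  lebesgue_measure ([set t : R | (0 < t)%R] `&` [set t | (M < `|f t|)%R]) = 0 ->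
  forall t, (0 <= t)%R -> rearr f t <= (Num.max M 0)%:E.
Proof.
move=> mf fM t t0; apply: rearr_le; first by rewrite le_max lexx orbT.
apply: le_trans (_ : 0 <= t%:E); last by rewrite lee_fin.
rewrite -fM; apply: le_measure; rewrite ?inE; try exact: measurable_distrib_set.
by move=> x [x0 /= fx]; split => //; apply: le_lt_trans fx; rewrite le_max lexx.
Qed.

Lemma measurable_rearr f M : (forall t, (0 < t)%R -> rearr f t <= M%:E) ->
  measurable_fun (`]0%R, +oo[ : set R) (rearr f).
Proof.
move=> fM; pose G t := if (0 < t)%R then fine (rearr f t) else M.
have rearr_fin t : (0 < t)%R -> rearr f t \is a fin_num.
  move=> t0; rewrite ge0_fin_numE ?rearr_ge0 //.
  by apply: le_lt_trans (fM t t0) _; rewrite ltey.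
have G_ni : nonincreasing_fun G.
  move=> x y xy; rewrite /G; case: ifPn => x0; case: ifPn => y0 //.
  - by apply: fine_le; rewrite ?rearr_fin //; exact: rearr_nonincreasing.
  - by rewrite -lee_fin fineK ?rearr_fin ?fM.
  - by move: x0; rewrite (lt_le_trans y0 xy).
apply: (eq_measurable_fun (EFin \o G)).
  by move=> x; rewrite inE /= in_itv /= andbT => x0; rewrite /G x0 fineK ?rearr_fin.
by apply/measurable_EFinP; exact: nonincreasing_measurable.
Qed.

Lemma rearr_le_nonincreasing f t : nonincreasing_fun f -> (forall u, 0 <= f u)%R ->
  (0 <= t)%R -> rearr f t <= (f t)%:E.
Proof.
move=> f_ni f_ge0 t0; apply: rearr_le => //.
apply: (@le_trans _ _ (lebesgue_measure (`]0%R, t] : set R))).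
  apply: le_measure; rewrite ?inE; [|exact: measurable_itv|].
    by apply: measurable_distrib_set; exact: nonincreasing_measurable.
  move=> u [/= u0 fu]; rewrite /= in_itv /= u0 /= leNgt; apply/negP => tu.
  by move: fu; rewrite ger0_norm // ltNge f_ni // ltW.
rewrite lebesgue_measure_itv /= lte_fin; case: ifPn => //.
by rewrite oppr0 adde0.
Qed.

Lemma rearr_ge_lower_bound f t a s : measurable_fun (`]0%R, +oo[ : set R) f ->
  (forall u, (0 < u < a)%R -> (s <= `|f u|)%R) -> (0 < t < a)%R -> s%:E <= rearr f t.
Proof.
move=> mf fs /andP[t0 ta]; apply: rearr_ge => x /andP[_ xs].
apply: (@lt_le_trans _ _ (lebesgue_measure (`]0%R, a[ : set R))).
  by rewrite lebesgue_measure_itv /= lte_fin (lt_trans t0 ta) oppr0 adde0 lte_fin.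
apply: le_measure; rewrite ?inE; [exact: measurable_itv|exact: measurable_distrib_set|].
move=> u; rewrite /= in_itv /= => /andP[u0 ua]; split => //=.
by apply: lt_le_trans xs _; apply: fs; rewrite u0.
Qed.

End rearrangement.

Definition shift0 {R : realType} (a : nat -> R) (j : nat) : R :=
  if j is j'.+1 then a j' else 0.

Lemma shift0_lt {R : realType} (a : nat -> R) :
  0 < a 0%N -> (forall j, a j < a j.+1) -> forall j, shift0 a j < shift0 a j.+1.
Proof. by move=> a0 a_lt [|j] /=; [exact: a0 | exact: a_lt]. Qed.

Lemma shift0_unbounded {R : realType} (a : nat -> R) :
  (forall t, exists j, t < a j) -> forall t, exists j, t < shift0 a j.
Proof. by move=> a_unb t; have [j tj] := a_unb t; exists j.+1. Qed.

Section blocks.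
Context {R : realType}.
Variable b : nat -> R.
Hypotheses (b0 : b 0%N = 0) (b_lt : forall j, b j < b j.+1)
  (b_unbounded : forall t, exists j, t < b j).

Let b_le : {homo b : i k / (i <= k)%N >-> i <= k}.
Proof. by apply/nondecreasing_seqP => j; exact/ltW/b_lt. Qed.

Let b_ge0 j : 0 <= b j. Proof. by rewrite -b0 b_le. Qed.

Local Notation blk j := (`]b j, b j.+1]%classic : set R).

Let bigcup_blk : \bigcup_j blk j = `]0, +oo[%classic.
Proof.
apply/seteqP; split => t.
  move=> [j _]; rewrite /= !in_itv /= andbT => /andP[bt _].
  exact: le_lt_trans (b_ge0 j) bt.
rewrite /= in_itv /= andbT => t0.
have [|j tj jmin] := ex_minnP (_ : exists j, t <= b j).
  by have [j tj] := b_unbounded t; exists j; exact: ltW.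
case: j tj jmin => [|j] tj jmin; first by move: tj; rewrite b0 leNgt t0.
exists j => //; rewrite /= in_itv /= tj andbT ltNge; apply/negP => /jmin.
by rewrite ltnn.
Qed.

Let trivIset_blk : trivIset setT (fun j => blk j).
Proof.
move=> i j _ _ [t [/=]]; rewrite /= !in_itv /= => /andP[it ti] /andP[jt tj].
apply/eqP; rewrite eqn_leq; apply/andP; split; rewrite leqNgt; apply/negP => /b_le.
- by rewrite leNgt (lt_le_trans it tj).
- by rewrite leNgt (lt_le_trans jt ti).
Qed.

Local Open Scope ereal_scope.
Variables (F : cumulative R R) (g : R -> \bar R).
Hypotheses (g_ge0 : forall t, 0 <= g t)
  (g_ni : forall s t, (s <= t)%R -> g t <= g s)
  (mg : measurable_fun (`]0%R, +oo[ : set R) g).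

Let integral_blk_series :
  \int[lebesgue_stieltjes_measure F]_(t in `]0%R, +oo[) g t =
  \sum_(j <oo) \int[lebesgue_stieltjes_measure F]_(t in blk j) g t.
Proof.
by rewrite -bigcup_blk ge0_integral_bigcup // bigcup_blk.
Qed.

Let mg_blk j : measurable_fun (blk j) g.
Proof.
apply: measurable_funS mg => // t; rewrite /= !in_itv /= andbT => /andP[bt _].
exact: le_lt_trans (b_ge0 j) bt.
Qed.

Let lebesgue_stieltjes_blk j :
  lebesgue_stieltjes_measure F (blk j) = (F (b j.+1) - F (b j))%:E.
Proof. exact/lebesgue_stieltjes_measure_itv_oc/ltW/b_lt. Qed.

Let integral_blk_le j :
  \int[lebesgue_stieltjes_measure F]_(t in blk j) g t <=
  g (b j) * (F (b j.+1) - F (b j))%:E.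
Proof.
rewrite -lebesgue_stieltjes_blk -integral_cst //.
apply: ge0_le_integral => //; try exact: measurable_itv; try exact: mg_blk.
by move=> t; rewrite /= in_itv /= => /andP[bt _]; apply/g_ni/ltW.
Qed.

Let integral_blk_ge j :
  g (b j.+1) * (F (b j.+1) - F (b j))%:E <=
  \int[lebesgue_stieltjes_measure F]_(t in blk j) g t.
Proof.
rewrite -lebesgue_stieltjes_blk -integral_cst //.
apply: ge0_le_integral => //; try exact: measurable_itv; try exact: mg_blk.
  by move=> t _; exact: g_ge0.
by move=> t; rewrite /= in_itv /= => /andP[_ tb]; exact: g_ni.
Qed.

Lemma integral_ge_block_sum J :
  \sum_(j < J) g (b j.+1) * (F (b j.+1) - F (b j))%:E <=
  \int[lebesgue_stieltjes_measure F]_(t in `]0%R, +oo[) g t.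
Proof.
rewrite integral_blk_series; apply: le_trans (nneseries_lim_ge J _); last first.
  by move=> j _ _; apply: integral_ge0 => t _; exact: g_ge0.
by rewrite big_mkord; apply: lee_sum => j _; exact: integral_blk_ge.
Qed.

Lemma integral_le_block_series :
  \int[lebesgue_stieltjes_measure F]_(t in `]0%R, +oo[) g t <=
  \sum_(j <oo) g (b j) * (F (b j.+1) - F (b j))%:E.
Proof.
rewrite integral_blk_series; apply: lee_nneseries => [j _ _|j _].
  by apply: integral_ge0 => t _; exact: g_ge0.
exact: integral_blk_le.
Qed.

End blocks.

Lemma nneseries_le_ub {R : realType} (u : nat -> \bar R) (C : \bar R) :
  (forall j, (0 <= u j)%E) -> (forall k, (\sum_(j < k) u j <= C)%E) ->
  (\sum_(j <oo) u j <= C)%E.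
Proof.
move=> u_ge0 uC; apply: lime_le; first exact: is_cvg_nneseries.
by apply: nearW => k; rewrite big_mkord.
Qed.

Lemma sum_inv_expr2_le {R : realFieldType} k : \sum_(j < k) ((2 : R) ^+ j)^-1 <= 2.
Proof.
suff -> : \sum_(j < k) ((2 : R) ^+ j)^-1 = 2 - 2 * (2 ^+ k)^-1.
  by rewrite gerBl mulr_ge0 // invr_ge0 exprn_ge0.
elim: k => [|k IH]; first by rewrite big_ord0 expr0 invr1 mulr1 subrr.
by rewrite big_ord_recr /= IH exprS invfM; lra.
Qed.

Lemma doubling_abel_summation {R : realFieldType} (u P e : nat -> R) (c : R) :
  0 < c -> (forall j, 0 <= u j) -> (forall j, u j.+1 <= u j) ->
  (forall j, 0 <= e j) -> (forall j, e j.+1 = 2 * e j) ->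
  (forall j, c * e j <= P j) ->
  forall J, c * \sum_(j < J.+1) u j * e j <=
    2 * \sum_(j < J) u j.+1 * (P j.+1 - P j) + 2 * u 0%N * P 0%N.
Proof.
move=> c0 u0 un e0 eS cP J.
(* Induction on J, keeping the boundary term of the Abel summation explicit. *)
suff invariant : c * \sum_(j < J.+1) u j * e j - (2 * c * e J - 2 * P 0%N) * u J <=
   2 * (\sum_(j < J) u j.+1 * (P j.+1 - P j) - u J * (P J - P 0%N)) + 2 * u 0%N * P 0%N.
  have boundary_ge0 : 0 <= u J * (P J - c * e J) by rewrite mulr_ge0 // subr_ge0.
  lra.
elim: J => [|J IH].
  rewrite big_ord_recr big_ord0 /= add0r big_ord0.
  have ue0_ge0 : 0 <= c * (u 0%N * e 0%N) by rewrite !mulr_ge0 // ltW.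
  lra.
rewrite [X in _ <= 2 * (X - _) + _]big_ord_recr [X in c * X - _]big_ord_recr /=.
have step : (c * e J.+1 - 2 * P 0%N) * (u J - u J.+1) <=
            2 * (P J - P 0%N) * (u J - u J.+1).
  apply: ler_wpM2r; first by rewrite subr_ge0.
  rewrite eS; have := cP J; lra.
rewrite eS in step *.
lra.
Qed.

Section step_function.
Context {R : realType}.
Variables (a v : nat -> R).
Hypotheses (a_unbounded : forall t, exists j, t < a j)
  (a_nd : forall i k, (i <= k)%N -> a i <= a k)
  (v_ni : forall i k, (i <= k)%N -> v k <= v i).

Definition step_index t := ex_minn (a_unbounded t).

Definition step_fun t := v (step_index t).

Let step_indexP t : t < a (step_index t).
Proof. by rewrite /step_index; case: ex_minnP. Qed.

Let step_index_min t j : t < a j -> (step_index t <= j)%N.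
Proof. by rewrite /step_index; case: ex_minnP => k _ kmin /kmin. Qed.

Lemma step_fun_nonincreasing : nonincreasing_fun step_fun.
Proof.
move=> s t st; apply/v_ni/step_index_min.
exact: le_lt_trans st (step_indexP t).
Qed.

Lemma step_fun_ge j t : t < a j -> v j <= step_fun t.
Proof. by move=> tj; apply/v_ni/step_index_min. Qed.

Lemma step_fun_le_shift0 j t : shift0 a j <= t -> step_fun t <= v j.
Proof.
case: j => [_|j /= jt]; first exact: v_ni.
apply: v_ni; rewrite ltnNge; apply/negP => /a_nd.
by rewrite leNgt (le_lt_trans jt (step_indexP t)).
Qed.

End step_function.

Section sufficiency.
Context {R : realType}.
Variables (n K : nat) (psi : R -> R) (c : R) (f : R -> R) (M : R).
Hypotheses (n0 : (0 < n)%N) (psi_okP : psi_ok psi) (c0 : 0 < c)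
  (psi_large : forall k, (K <= k)%N -> c * 2 ^+ k <= psi (2 ^+ (k * n)))
  (rearr_le_M : forall t, 0 <= t -> (rearr f t <= M%:E)%E)
  (Lf : (lorentz_norm psi f < +oo)%E).

Let b := shift0 (fun j => 2 ^+ ((K + j) * n) : R).

Let b_lt j : b j < b j.+1.
Proof.
apply: shift0_lt j => [|j]; first exact: expr2_gt0.
by rewrite ltr_eXn2l ?ltr1n // ltn_pmul2r // addnS.
Qed.

Let b_unbounded t : exists j, t < b j.
Proof.
apply: shift0_unbounded => {}t; have [k tk] := exists_dyadic_gt n t n0.
by exists k; rewrite (lt_le_trans tk) // ler_expr2 // leq_mul2r leq_addl orbT.
Qed.

Let b_gt0 j : 0 < b j.+1. Proof. exact: expr2_gt0. Qed.

Let mrearr : measurable_fun (`]0%R, +oo[ : set R) (rearr f).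
Proof. by apply: (@measurable_rearr _ f M) => t t0; exact/rearr_le_M/ltW. Qed.

Let u j := fine (rearr f (b j.+1)).
Let P j := psiF psi (b j.+1).
Let e j : R := 2 ^+ (K + j).
Let N := fine (lorentz_norm psi f).

Let rearrE j : rearr f (b j.+1) = (u j)%:E.
Proof.
rewrite /u fineK // ge0_fin_numE ?rearr_ge0 //.
by apply: le_lt_trans (rearr_le_M _ (ltW (b_gt0 j))) _; rewrite ltey.
Qed.

Let u_ge0 j : 0 <= u j. Proof. by rewrite -lee_fin -rearrE rearr_ge0. Qed.

Let u_ni j : u j.+1 <= u j.
Proof. by rewrite -lee_fin -!rearrE; apply/rearr_nonincreasing/ltW. Qed.

Let ce_le_P j : c * e j <= P j.
Proof.
apply: le_trans (psi_large _ (leq_addr _ _)) _.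
exact/(psiF_ge psi_okP)/b_gt0.
Qed.

Let psi_lower_sum_le J : \sum_(j < J) u j.+1 * (P j.+1 - P j) <= N.
Proof.
have Lfin : lorentz_norm psi f \is a fin_num.
  by rewrite ge0_fin_numE ?Lf //; apply: integral_ge0 => t _; exact: rearr_ge0.
rewrite -lee_fin /N fineK // -sumEFin.
apply: le_trans _ (integral_ge_block_sum b erefl b_lt b_unbounded (psiF psi)
  (rearr f) (rearr_ge0 f) (rearr_nonincreasing f) mrearr J.+1).
rewrite big_ord_recl -[X in (X <= _)%E]add0e leeD //.
  by apply: mule_ge0; rewrite ?rearr_ge0 // lee_fin subr_ge0 psiF_nd // ltW.
by apply: lee_sum => j _; rewrite /= rearrE.
Qed.

Let weighted_sum_le J : \sum_(j < J) u j * e j <= (2 * N + 2 * u 0%N * P 0%N) / c.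
Proof.
have e_ge0 j : 0 <= e j by exact/ltW/expr2_gt0.
rewrite ler_pdivlMr // [leLHS]mulrC.
apply: (@le_trans _ _ (c * \sum_(j < J.+1) u j * e j)).
  by apply: ler_wpM2l; [exact: ltW | rewrite big_ord_recr /= lerDl mulr_ge0].
apply: le_trans (doubling_abel_summation u P e c c0 u_ge0 u_ni e_ge0 _ ce_le_P J) _.
  by move=> j; rewrite /e addnS exprS.
by rewrite lerD2r; apply: ler_wpM2l => //; exact: psi_lower_sum_le.
Qed.

Let nroot_increment_le j :
  psiF (nroot n) (b j.+2) - psiF (nroot n) (b j.+1) <= 4 * e j.
Proof.
apply: (@le_trans _ _ (psiF (nroot n) (b j.+2))).
  by rewrite gerBl psiF_ge0 //; exact: nroot_psi_ok.
apply: le_trans (nrootF_le n _ n0 (b_gt0 j.+1)) _.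
by rewrite /= powR_exprM_inv ?ler0n // /e addnS exprS mulrA -natrM.
Qed.

Lemma lorentz_norm_nroot_lt_pinfty : (lorentz_norm (nroot n) f < +oo)%E.
Proof.
have M_ge0 : 0 <= M by rewrite -lee_fin (le_trans (rearr_ge0 f 0)) ?rearr_le_M.
have F_ge0 := psiF_ge0 (@nroot_psi_ok R n).
have N_ge0 : 0 <= N by rewrite fine_ge0 //; apply: integral_ge0 => t _; exact: rearr_ge0.
have P_ge0 j : 0 <= P j by exact: psiF_ge0.
pose C := M * psiF (nroot n) (b 1%N) + 4 * ((2 * N + 2 * u 0%N * P 0%N) / c).
apply: (@le_lt_trans _ _ C%:E); last exact: ltey.
apply: le_trans (integral_le_block_series b erefl b_lt b_unbounded (psiF (nroot n))
  (rearr f) (rearr_ge0 f) (rearr_nonincreasing f) mrearr) _.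
have F_incr j : (0 <= (psiF (nroot n) (b j.+1) - psiF (nroot n) (b j))%:E)%E.
  by rewrite lee_fin subr_ge0 psiF_nd // ltW.
apply: nneseries_le_ub => [j|[|J]]; first exact: mule_ge0 (rearr_ge0 _ _) (F_incr j).
  rewrite big_ord0 lee_fin; apply: addr_ge0; first exact: mulr_ge0 M_ge0 (F_ge0 _).
  by rewrite mulr_ge0 // divr_ge0 ?(ltW c0) // addr_ge0 // !mulr_ge0.
rewrite big_ord_recl /C [leRHS]EFinD; apply: leeD.
  apply: le_trans (lee_wpmul2r (F_incr 0%N) (rearr_le_M _ (lexx 0))) _.
  by rewrite -EFinM lee_fin ler_wpM2l // lerBlDr lerDl.
under eq_bigr => j _ do rewrite lift0 rearrE -EFinM.
rewrite sumEFin lee_fin.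
apply: (@le_trans _ _ (\sum_(j < J) u j * (4 * e j))).
  by apply: ler_sum => j _; apply: ler_wpM2l; [exact: u_ge0 | exact: nroot_increment_le].
under eq_bigr do rewrite mulrCA.
by rewrite -mulr_sumr; apply: ler_wpM2l => //; exact: weighted_sum_le.
Qed.

End sufficiency.

Lemma Lambda_Linfty_sub_Ln1 {R : realType} (n : nat) (psi : R -> R) : (0 < n)%N ->
  {in `[0, +oo[ &, {homo psi : x y / x <= y}} -> 0 <= psi 0 ->
  (exists2 c : R, 0 < c &
     exists K, forall k, (K <= k)%N -> c <= psi (2 ^+ (k * n)) / 2 ^+ k) ->
  Lambda psi `&` Linfty R `<=` Ln1 R n.
Proof.
move=> n0 psi_nd psi0 [c c0 [K large]] f [[mf Lf] [_ [M fM]]].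
split; first exact: mf.
apply: (@lorentz_norm_nroot_lt_pinfty _ n K psi c f (Num.max M 0) n0 _ c0 _ _ Lf).
- exact: nondecreasing_psi_ok.
- by move=> k Kk; rewrite -ler_pdivlMr ?expr2_gt0 ?large.
- exact: rearr_le_Linfty.
Qed.

Lemma concave_double_le {R : realType} (psi : R -> R) (x : R) :
  concave_on_nonneg psi -> psi 0 = 0 -> 0 <= x -> psi (2 * x) <= 2 * psi x.
Proof.
move=> psi_cvx psi0 x0.
have := psi_cvx (2 * x) 0 2^-1 (mulr_ge0 (ler0n _ 2) x0) (lexx 0).
rewrite psi0 !mulr0 !addr0 mulrA mulVf ?pnatr_eq0 // mul1r.
by rewrite invr_ge0 invf_le1 ?ler0n ?ler1n ?ltr0n // => /(_ isT isT); lra.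
Qed.

Section necessity.
Context {R : realType}.
Variables (n : nat) (psi : R -> R) (m : nat -> nat).
Hypotheses (n0 : (0 < n)%N) (psi_okP : psi_ok psi) (m0 : (4 <= m 0)%N)
  (mS : forall j, (m j + 4 <= m j.+1)%N)
  (psi_double : forall x, 0 <= x -> psi (2 * x) <= 2 * psi x)
  (m_small : forall j, psi (2 ^+ (m j * n)) / 2 ^+ m j < (2 ^+ j)^-1).

Let m_le : {homo m : i k / (i <= k)%N}.
Proof.
by apply: homo_leq leqnn leq_trans _ => j; exact: leq_trans (leq_addr 4 _) (mS j).
Qed.

Let a j : R := 2 ^+ (m j * n).
Let v j : R := (2 ^+ m j)^-1.

Let a_gt0 j : 0 < a j. Proof. exact: expr2_gt0. Qed.

Let a_nd i k : (i <= k)%N -> a i <= a k.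
Proof. by move=> ik; apply: ler_expr2; rewrite leq_mul2r m_le ?orbT. Qed.

Let m_ge j : (j <= m j)%N.
Proof.
elim: j => // j ih; apply: leq_ltn_trans ih _.
by apply: leq_trans (mS j); rewrite -addn1 leq_add2l.
Qed.

Let a_unbounded t : exists j, t < a j.
Proof.
have [k tk] := exists_dyadic_gt n t n0; exists k; apply: lt_le_trans tk _.
by apply: ler_expr2; rewrite leq_mul2r m_ge orbT.
Qed.

Let v_ni i k : (i <= k)%N -> v k <= v i.
Proof. by move=> ik; rewrite lef_pV2 ?posrE ?expr2_gt0 //; apply/ler_expr2/m_le. Qed.

Let f := step_fun a v a_unbounded.

Let f_gt0 t : 0 < f t. Proof. by rewrite invr_gt0 expr2_gt0. Qed.

Let f_ni : nonincreasing_fun f.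
Proof. exact: step_fun_nonincreasing. Qed.

Let mf : measurable_fun (`]0%R, +oo[ : set R) f.
Proof. exact: nonincreasing_measurable. Qed.

Let rearr_le_f t : 0 <= t -> (rearr f t <= (f t)%:E)%E.
Proof. by apply: rearr_le_nonincreasing => // u; exact: ltW. Qed.

Let mrearr : measurable_fun (`]0%R, +oo[ : set R) (rearr f).
Proof.
apply: (@measurable_rearr _ f 1) => t t0; apply: le_trans (rearr_le_f _ (ltW t0)) _.
by rewrite lee_fin invf_le1 ?expr2_gt0 // exprn_ege1 // ler1n.
Qed.

Let a_lt j : a j < a j.+1.
Proof.
rewrite /a ltr_eXn2l ?ltr1n // ltn_pmul2r //.
by apply: leq_trans (mS j); rewrite -addn1 leq_add2l.
Qed.

Let b := shift0 a.

Let b_lt : forall j, b j < b j.+1. Proof. exact: shift0_lt. Qed.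

Let b_unbounded : forall t, exists j, t < b j. Proof. exact: shift0_unbounded. Qed.

Let b_ge0 j : 0 <= b j. Proof. by case: j => //= j; exact: ltW. Qed.

Let psi_block_le j :
  (rearr f (b j) * (psiF psi (b j.+1) - psiF psi (b j))%:E <= (2 * (2 ^+ j)^-1)%:E)%E.
Proof.
have F_incr : 0 <= psiF psi (b j.+1) - psiF psi (b j) by rewrite subr_ge0 psiF_nd // ltW.
have rearr_le_v : (rearr f (b j) <= (v j)%:E)%E.
  apply: le_trans (rearr_le_f _ (b_ge0 j)) _.
  by rewrite lee_fin; exact: (@step_fun_le_shift0 _ a v a_unbounded a_nd v_ni j _ (lexx _)).
apply: le_trans (lee_wpmul2r _ rearr_le_v) _; first by rewrite lee_fin.
rewrite -EFinM lee_fin.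
apply: (@le_trans _ _ (v j * (2 * psi (a j)))); last first.
  by rewrite mulrCA ler_pM2l // mulrC; exact: ltW (m_small j).
apply: ler_wpM2l; first by rewrite invr_ge0 ltW ?expr2_gt0.
apply: le_trans _ (psi_double _ (ltW (a_gt0 j))).
apply: le_trans _ (psiF_le psi_okP (a j) (2 * a j) _).
  by rewrite gerBl (psiF_ge0 psi_okP).
by rewrite max_l ?(ltW (a_gt0 j)) // ltr_pMl // ltr1n.
Qed.

Let lorentz_norm_step_lt_pinfty : (lorentz_norm psi f < +oo)%E.
Proof.
apply: (@le_lt_trans _ _ 4%:E); last exact: ltey.
apply: le_trans (integral_le_block_series b erefl b_lt b_unbounded (psiF psi)
  (rearr f) (rearr_ge0 f) (rearr_nonincreasing f) mrearr) _.
apply: nneseries_le_ub => [j|k].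
  by apply: mule_ge0; rewrite ?rearr_ge0 // lee_fin subr_ge0 psiF_nd // ltW.
apply: (@le_trans _ _ (\sum_(j < k) (2 * (2 ^+ j)^-1)%:E)%E).
  by apply: lee_sum => j _; exact: psi_block_le.
rewrite sumEFin lee_fin -mulr_sumr.
by have := @sum_inv_expr2_le R k; lra.
Qed.

(* On ]a_(j-1)/2, a_j/2] the rearrangement of f is at least 2^(-m_j), while
   t^(1/n) increases by at least 2^(m_j)/4. *)
Let c := shift0 (fun j => a j / 2).

Let c_lt : forall j, c j < c j.+1.
Proof.
by apply: shift0_lt => [|j]; rewrite ?divr_gt0 // ltr_pM2r ?invr_gt0.
Qed.

Let c_unbounded : forall t, exists j, t < c j.
Proof.
apply: shift0_unbounded => t; have [j tj] := a_unbounded (2 * t).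
by exists j; rewrite ltr_pdivlMr // mulrC.
Qed.

Let nroot_ok := @nroot_psi_ok R n.

Let nrootF_c_le j : psiF (nroot n) (c j) <= 2 ^+ m j / 4.
Proof.
have m16 k : (2 : R) ^+ k * 16 <= 2 ^+ (k + 4).
  by rewrite exprD ler_wpM2l ?exprn_ge0 // -natrX ler_nat.
case: j => [|j] /=.
  apply: le_trans (psiF_le nroot_ok 0 1 _) _; first by rewrite maxxx ltr01.
  rewrite powR1 ler_pdivlMr // mul1r; apply: le_trans _ (ler_expr2 _ _ m0).
  by rewrite -natrX ler_nat.
apply: le_trans (psiF_le nroot_ok (a j / 2) (a j) _) _.
  by rewrite max_l ?divr_ge0 ?(ltW (a_gt0 j)) // ltr_pdivrMr // ltr_pMr // ltr1n.
rewrite /= powR_exprM_inv ?ler0n // ler_pdivlMr //.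
apply: le_trans _ (ler_expr2 _ _ (mS j)); apply: le_trans _ (m16 _).
by rewrite ler_wpM2l ?exprn_ge0 // ler_nat.
Qed.

Let nrootF_half_ge j : 2 ^+ m j / 2 <= psiF (nroot n) (a j / 2).
Proof.
apply: le_trans _ (psiF_ge nroot_ok (a j / 2) _); last by rewrite divr_gt0.
rewrite /= powRM ?(ltW (a_gt0 j)) ?invr_ge0 ?ler0n // powR_exprM_inv ?ler0n //.
apply: ler_wpM2l; first exact/ltW/expr2_gt0.
by rewrite ger1_powR ?invr_gt0 ?ltr0n ?invf_le1 ?ltr0n ?ler1n.
Qed.

Let nroot_block_ge j : ((4^-1 : R)%:E <=
  rearr f (c j.+1) * (psiF (nroot n) (c j.+1) - psiF (nroot n) (c j))%:E)%E.
Proof.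
have v_le : ((v j)%:E <= rearr f (c j.+1))%E.
  apply: (@rearr_ge_lower_bound _ f _ (a j)) => //.
    move=> u /andP[u0 uj]; rewrite ger0_norm ?(ltW (f_gt0 u)) //.
    exact: (@step_fun_ge _ a v a_unbounded v_ni).
  by rewrite /= divr_gt0 //= ltr_pdivrMr // ltr_pMr // ltr1n.
have incr_ge : 2 ^+ m j / 4 <= psiF (nroot n) (c j.+1) - psiF (nroot n) (c j).
  have := nrootF_c_le j; have := nrootF_half_ge j; rewrite /=; lra.
have -> : (4^-1 : R) = v j * (2 ^+ m j / 4).
  by rewrite mulrA mulVf ?mul1r // gt_eqF ?expr2_gt0.
by rewrite EFinM; apply: lee_pmul => //; rewrite lee_fin // invr_ge0 exprn_ge0.
Qed.

Let lorentz_norm_nroot_step_ge J : ((J%:R / 4)%:E <= lorentz_norm (nroot n) f)%E.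
Proof.
apply: le_trans _ (integral_ge_block_sum c erefl c_lt c_unbounded (psiF (nroot n))
  (rearr f) (rearr_ge0 f) (rearr_nonincreasing f) mrearr J).
have -> : (J%:R / 4 : R)%:E = (\sum_(j < J) (4^-1 : R)%:E)%E.
  by rewrite sumEFin sumr_const card_ord mulr_natl.
by apply: lee_sum => j _; exact: nroot_block_ge.
Qed.

Lemma Lambda_Linfty_not_Ln1 : exists2 g, (Lambda psi `&` Linfty R) g & ~ Ln1 R n g.
Proof.
have f_le1 t : f t <= 1 by rewrite invf_le1 ?expr2_gt0 // exprn_ege1 // ler1n.
exists f.
  split; first by split; [exact: mf | exact: lorentz_norm_step_lt_pinfty].
  split; first exact: mf.
  exists 1; suff -> : [set t | 0 < t] `&` [set t | 1 < `|f t|] = set0 by rewrite measure0.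
  apply/seteqP; split => [t [_ /=]|//].
  by rewrite ger0_norm ?(ltW (f_gt0 t)) // ltNge f_le1.
move=> [_ Lfin].
have L_ge0 : (0 <= lorentz_norm (nroot n) f)%E.
  by apply: integral_ge0 => t _; exact: rearr_ge0.
have L_fin : lorentz_norm (nroot n) f \is a fin_num by rewrite ge0_fin_numE.
set L := fine (lorentz_norm (nroot n) f).
have := lorentz_norm_nroot_step_ge (4 * Num.bound L)%N.
rewrite -(fineK L_fin) -/L lee_fin natrM mulrAC mulfV ?pnatr_eq0 // mul1r => bound_le.
by have := lt_le_trans (archi_boundP (fine_ge0 L_ge0)) bound_le; rewrite ltxx.
Qed.

End necessity.

Lemma not_Lambda_Linfty_sub_Ln1 {R : realType} (n : nat) (psi : R -> R) : (0 < n)%N ->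
  {in `[0, +oo[ &, {homo psi : x y / x <= y}} -> concave_on_nonneg psi -> psi 0 = 0 ->
  limn_einf (fun m => (psi (2 ^+ (m * n)) / 2 ^+ m)%:E) = 0%E ->
  ~ (Lambda psi `&` Linfty R `<=` Ln1 R n).
Proof.
move=> n0 psi_nd psi_cvx psi0 liminf0.
have psi0_ge0 : 0 <= psi 0 by rewrite psi0.
have eps_gt0 j : 0 < (2 ^+ j : R)^-1 by rewrite invr_gt0 expr2_gt0.
have [m [m0 mS m_small]] := limn_einf_eq0_sparse _ _ 4
  (dyadic_ratio_ge0 n psi psi_nd psi0_ge0) liminf0 eps_gt0.
have [f Lf not_Ln1f] := @Lambda_Linfty_not_Ln1 R n psi m n0
  (nondecreasing_psi_ok _ psi_nd psi0_ge0) m0 mS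
  (fun x => concave_double_le _ x psi_cvx psi0) m_small.
by move=> sub; apply/not_Ln1f/sub.
Qed.

Theorem lemma4p4 (R : realType) (n : nat) (psi : R -> R) :
  (0 < n)%N ->
  {in `[0, +oo[ &, {homo psi : x y / x <= y}} ->
  concave_on_nonneg psi ->
  psi 0 = 0 ->
  [/\ (~ (Lambda psi `&` Linfty R `<=` Ln1 R n) <->
         liminf_pinfty (fun t : R => (psi t / t `^ (n%:R)^-1)%:E) = 0%E),
      (liminf_pinfty (fun t : R => (psi t / t `^ (n%:R)^-1)%:E) = 0%E <->
         limn_einf (fun m : nat => (psi (2 ^+ (m * n)) / 2 ^+ m)%:E) = 0%E) &
      (~ (Lambda psi `&` Linfty R `<=` Ln1 R n) <->
         limn_einf (fun m : nat => (psi (2 ^+ (m * n)) / 2 ^+ m)%:E) = 0%E)].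
Proof.
move=> n0 psi_nd psi_cvx psi0.
have psi0_ge0 : 0 <= psi 0 by rewrite psi0.
have ii_iii := liminf_nroot_ratio_eq0_dyadic n psi n0 psi_nd psi0_ge0.
have i_iii : ~ (Lambda psi `&` Linfty R `<=` Ln1 R n) <->
    limn_einf (fun m => (psi (2 ^+ (m * n)) / 2 ^+ m)%:E) = 0%E.
  split; last exact: not_Lambda_Linfty_sub_Ln1.
  apply: contra_notP => /eqP /(limn_einf_neq0 _ (dyadic_ratio_ge0 n psi psi_nd psi0_ge0)).
  exact: Lambda_Linfty_sub_Ln1.
by split; [exact: iff_trans i_iii (iff_sym ii_iii) | exact: ii_iii | exact: i_iii].
Qed.
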